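(* Let $(W,\omega^W)$ be a vertex operator algebra and $\omega'\in\operatorname{Sc}(W,\omega^W)$ with $Y(\omega',z)=\sum_nL'(n)z^{-n-2}$. Then $L^W(n)=L'(n)$ on $C_W(C_W(\langle\omega'\rangle))$ for all $n\ge -1$.
   Context: $Y(\omega^W,z)=\sum_nL^W(n)z^{-n-2}$. A semi-conformal vector $\omega'$ of $(W,\omega^W)$ is the conformal vector of a vertex operator subalgebra $(U,\omega')$ (possibly different conformal vector) with $\omega^W_n|_U=\omega'_n|_U$ for all $n\ge0$; $\operatorname{Sc}(W,\omega^W)$ is the set of these. $C_W(U)=\{v\in W:u_nv=0\ \forall u\in U,n\ge0\}$; $\langle\omega'\rangle$ is the vertex subalgebra generated by $\omega'$ and $\mathbf1$. *)

(* Vertex operator algebras over a field K of characteristic 0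
   (the paper works over C). *)
From HB Require Import structures.
From mathcomp Require Import all_boot all_order all_algebra.
Set Implicit Arguments. Unset Strict Implicit. Unset Printing Implicit Defensive.
Import Order.TTheory GRing.Theory Num.Theory.
Local Open Scope ring_scope.

Section VOA.
Variables (K : fieldType) (V : lmodType K).

(* A vertex operator is given by its modes: [Y u n v] is u_n v,
   i.e. Y(u,z) = sum_n u_n z^{-n-1}. *)
Definition vop := V -> int -> V -> V.

Definition binz (p : int) (i : nat) : K :=
  (\prod_(j < i) (p - (j : nat)%:Z)%:~R) / (i`!)%:R.

Definition vertex_algebra (Y : vop) (one : V) : Prop :=
  [/\ ((forall n a u u' v, Y (a *: u + u') n v = a *: Y u n v + Y u' n v) /\
      (forall n a u v v', Y u n (a *: v + v') = a *: Y u n v + Y u n v')),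
      (forall u v, exists N : int, forall n, N <= n -> Y u n v = 0),
      (forall n v, Y one n v = if n == -1 then v else 0),
      (forall u, Y u (-1) one = u /\ forall n, 0 <= n -> Y u n one = 0) &
      (* Borcherds identity; both sides are finite sums by truncation, so
         equality of the sums is equality of all sufficiently long partial sums *)
      (forall (p q r : int) u v w, exists N : nat, forall M : nat, (N <= M)%N ->
        \sum_(i < M) binz p i *: Y (Y u (r + i%:Z) v) (p + q - i%:Z) w =
        \sum_(i < M) ((-1) ^+ i * binz r i) *:
            (Y u (p + r - i%:Z) (Y v (q + i%:Z) w)
             - (-1) ^ r *: Y v (q + r - i%:Z) (Y u (p + i%:Z) w)))].

Definition Lop (Y : vop) (om : V) (n : int) : V -> V := Y om (n + 1).

Definition wt_space (Y : vop) (U : V -> Prop) (om : V) (n : int) : V -> Prop :=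
  fun u => U u /\ Lop Y om 0 u = n%:~R *: u.

Definition conformal_on (Y : vop) (U : V -> Prop) (om : V) : Prop :=
  [/\ exists c : K, forall (m n : int) v, U v ->
        Lop Y om m (Lop Y om n v) - Lop Y om n (Lop Y om m v) =
        (m - n)%:~R *: Lop Y om (m + n) v
        + (((m ^+ 3 - m)%:~R / 12%:R) * (m + n == 0)%:R * c) *: v,
      (forall u v n, U u -> U v -> Y (Lop Y om (-1) u) n v = - (n%:~R *: Y u (n - 1) v)),
      (forall u, U u -> exists s : seq (int * V),
          (forall x, x \in s -> wt_space Y U om x.1 x.2) /\ u = \sum_(x <- s) x.2),
      (forall n, exists b : seq V, forall u, wt_space Y U om n u ->
          exists f : nat -> K, u = \sum_(i < size b) f i *: b`_i) &
      (exists N : int, forall n u, n < N -> wt_space Y U om n u -> u = 0)].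

Definition is_VOA (Y : vop) (one om : V) : Prop :=
  vertex_algebra Y one /\ conformal_on Y (fun _ => True) om.

Definition vsubalg (Y : vop) (one : V) (U : V -> Prop) : Prop :=
  [/\ U 0, (forall a u v, U u -> U v -> U (a *: u + v)), U one &
      (forall u n v, U u -> U v -> U (Y u n v))].

Definition semi_conformal (Y : vop) (one om om' : V) : Prop :=
  exists U : V -> Prop, [/\ vsubalg Y one U, U om', conformal_on Y U om' &
     forall n u, 0 <= n -> U u -> Y om n u = Y om' n u].

Definition commutant (Y : vop) (U : V -> Prop) : V -> Prop :=
  fun v => forall u n, U u -> 0 <= n -> Y u n v = 0.

Definition gen_subalg (Y : vop) (one : V) (S : V -> Prop) : V -> Prop :=
  fun v => forall P, vsubalg Y one P -> (forall s, S s -> P s) -> P v.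

End VOA.

(* Put x := omW - om'.  Skew symmetry turns the hypothesis omW_j = om'_j on the
   subalgebra of om' (j >= 0) into om'_k omW = om'_k om' for k >= 0, i.e. every
   nonnegative mode of om' kills x.  The elements whose nonnegative modes kill a
   fixed vector form a vertex subalgebra (Borcherds identity with p = 0), so
   <om'> kills x and x lies in C_W(<om'>).  Hence x_{n+1} v = 0 for every v in
   C_W(C_W(<om'>)) and n >= -1, which is L^W(n) v = L'(n) v.  Neither the
   characteristic nor the conformal structure of om' plays any role. *)
From HB Require Import structures.
From mathcomp Require Import all_boot all_order all_algebra.
From mathcomp Require Import zify.
Set Implicit Arguments. Unset Strict Implicit. Unset Printing Implicit Defensive.
Import Order.TTheory GRing.Theory Num.Theory.
Local Open Scope ring_scope.

Lemma binz0 (K : fieldType) (p : int) : binz K p 0 = 1.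
Proof. by rewrite /binz big_ord0 fact0 divr1. Qed.

Lemma binz0S (K : fieldType) (i : nat) : binz K 0 i.+1 = 0.
Proof. by rewrite /binz big_ord_recl /= subrr !mul0r. Qed.

Section VertexAlgebra.
Variables (K : fieldType) (W : lmodType K) (Y : vop W) (one : W).
Hypothesis HVA : vertex_algebra Y one.

Lemma YlinL n a u u' v : Y (a *: u + u') n v = a *: Y u n v + Y u' n v.
Proof. by case: HVA => [[linL _]] *; apply: linL. Qed.

Lemma YlinR n a u v v' : Y u n (a *: v + v') = a *: Y u n v + Y u n v'.
Proof. by case: HVA => [[_ linR]] *; apply: linR. Qed.

Lemma YsubL n u u' v : Y (u - u') n v = Y u n v - Y u' n v.
Proof. by rewrite addrC -scaleN1r YlinL scaleN1r addrC. Qed.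

Lemma YsubR n u v v' : Y u n (v - v') = Y u n v - Y u n v'.
Proof. by rewrite addrC -scaleN1r YlinR scaleN1r addrC. Qed.

Lemma Y0l n v : Y 0 n v = 0.
Proof. by have := YsubL n 0 0 v; rewrite !subrr. Qed.

Lemma Y0r n u : Y u n 0 = 0.
Proof. by have := YsubR n u 0 0; rewrite !subrr. Qed.

Definition annihilator (x : W) : W -> Prop :=
  fun u => forall n, 0 <= n -> Y u n x = 0.

Lemma vsubalg_annihilator x : vsubalg Y one (annihilator x).
Proof.
split=> [n _|a u v Hu Hv n Hn|n Hn|u m w Hu Hw n Hn].
- exact: Y0l.
- by rewrite YlinL Hu // Hv // scaler0 addr0.
- by case: HVA => _ _ vacuum _ _; rewrite vacuum; case: eqP => // E; rewrite E in Hn.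
- (* Borcherds identity with p = 0, q = n, r = m: only the i = 0 term survives
     on the left, and every term on the right ends in a nonnegative mode on x. *)
  case: HVA => _ _ _ _ borcherds.
  have [N HN] := borcherds 0 n m u w x.
  move: (HN N.+1 (leqnSn N)); rewrite big_ord_recl big1 => [|i _]; last first.
    by rewrite binz0S scale0r.
  rewrite big1 => [|i _]; last first.
    by rewrite Hw; last lia; rewrite Hu; last lia; rewrite !Y0r scaler0 subr0 scaler0.
  by rewrite addr0 binz0 scale1r /= addr0 add0r subr0.
Qed.

Lemma commutant_gen_subalg (S : W -> Prop) x :
  (forall s, S s -> annihilator x s) -> commutant Y (gen_subalg Y one S) x.
Proof. by move=> HS u n Hu; apply: (Hu _ (vsubalg_annihilator x)). Qed.

(* Skew symmetry u_{r-1} v = (-1)^r v_{r-1} u + (sum of vacuum descendants),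
   read off from the Borcherds identity with p = q = -1 and w = 1. *)
Lemma skew_symmetry u v r : exists N, forall M, (N <= M)%N ->
  \sum_(i < M) binz K (-1) i *: Y (Y u (r + i%:Z) v) (-1 + -1 - i%:Z) one =
  Y u (r - 1) v - (-1) ^ r *: Y v (r - 1) u.
Proof.
case: HVA => _ _ _ creation borcherds.
have [N HN] := borcherds (-1) (-1) r u v one.
exists N.+1 => -[|M] HM //; rewrite HN; last lia.
rewrite big_ord_recl big1 => [|i _]; last first.
  rewrite (proj2 (creation v)); last by rewrite lift0; lia.
  by rewrite (proj2 (creation u)); [rewrite !Y0r scaler0 subr0 scaler0 | rewrite lift0; lia].
have ord0_int : (@nat_of_ord M.+1 ord0)%:Z = 0 by [].
rewrite addr0 expr0 mul1r binz0 scale1r ord0_int addr0 subr0 [-1 + r]addrC.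
by rewrite (proj1 (creation v)) (proj1 (creation u)).
Qed.

Lemma mode_swap_eq u w :
  (forall j, 0 <= j -> Y u j w = Y w j w) ->
  forall k, 0 <= k -> Y w k u = Y w k w.
Proof.
move=> Huw k Hk.
have [N1 skew_uw] := skew_symmetry u w (k + 1).
have [N2 skew_ww] := skew_symmetry w w (k + 1).
have sums_eq :
    \sum_(i < maxn N1 N2) binz K (-1) i *: Y (Y u (k + 1 + i%:Z) w) (-1 + -1 - i%:Z) one =
    \sum_(i < maxn N1 N2) binz K (-1) i *: Y (Y w (k + 1 + i%:Z) w) (-1 + -1 - i%:Z) one.
  by apply: eq_bigr => i _; rewrite Huw //; lia.
rewrite skew_uw ?leq_maxl // skew_ww ?leq_maxr // addrK Huw // in sums_eq.
have sign_neq0 : (-1 : K) ^ (k + 1) != 0 by rewrite expfz_neq0 // oppr_eq0 oner_eq0.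
by move/addrI/oppr_inj/(scalerI sign_neq0): sums_eq.
Qed.

End VertexAlgebra.

Theorem proposition2p6 (K : fieldType) (charK0 : [pchar K] =i pred0)
  (W : lmodType K) (Y : vop W) (one omW om' : W) :
  is_VOA Y one omW -> semi_conformal Y one omW om' ->
  forall v, commutant Y (commutant Y (gen_subalg Y one (fun x => x = om'))) v ->
  forall n : int, -1 <= n -> Lop Y omW n v = Lop Y om' n v.
Proof.
move=> [HVA _] [U [_ Uom' _ agree]] v Hv n Hn.
have om'_kills : annihilator Y (omW - om') om'.
  move=> k Hk; rewrite (YsubR HVA) (mode_swap_eq HVA) ?subrr // => j Hj.
  exact: agree.
have diff_in_commutant :
    commutant Y (gen_subalg Y one (fun x => x = om')) (omW - om').
  by apply: (commutant_gen_subalg HVA) => s ->.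
apply/eqP; rewrite -subr_eq0 /Lop -(YsubL HVA) (Hv _ _ diff_in_commutant) //.
lia.
Qed.
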